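(* Let $G$ be a finite group and $n\ge1$, and let $a_1,\dots,a_{2n}$ be independent uniformly random elements of $G$. Then \[ Pr(a_{2n}a_{2n-1}\cdots a_1=a_1a_2\cdots a_{2n})=\frac{\sum_{x_1,\dots,x_n\in G}|Stab.Prod_n(x_1,\dots,x_n)|}{|G|^{2n}} \] and \[ Pr(a_{2n}a_{2n-1}\cdots a_1=a_1a_2\cdots a_{2n})=\sum_{i_1,\dots,i_n,j=1}^{c(G)}\frac{|\Omega_j|\cdot c_{i_1,\dots,i_n;j}(G)^2}{|\Omega_{i_1}|\cdots|\Omega_{i_n}|\cdot|G|^n}. \]
   Context: $c(G)$ is the number of conjugacy classes of $G$, and $\Omega_1,\dots,\Omega_{c(G)}$ are these classes. For $g_1,\dots,g_n\in G$, $Stab.Prod_n(g_1,\dots,g_n)$ is the set of all tuples $(b_1,\dots,b_n)\in G^n$ with $b_1^{-1}g_1b_1\cdot b_2^{-1}g_2b_2\cdots b_n^{-1}g_nb_n=g_1g_2\cdots g_n$. $c_{i_1,\dots,i_n;j}(G)$ is the number of tuples $(x_1,\dots,x_n)$ with $x_t\in\Omega_{i_t}$ for all $t$ and $x_1x_2\cdots x_n=y$, for a fixed $y\in\Omega_j$. This number is independent of the choice of $y$. *)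

From HB Require Import structures.
From mathcomp Require Import all_boot all_order all_algebra all_fingroup.
Set Implicit Arguments. Unset Strict Implicit. Unset Printing Implicit Defensive.
Import GRing.Theory.

Definition seqprod (gT : finGroupType) (m : nat) (a : {ffun 'I_m -> gT}) : gT :=
  (\prod_(i < m) a i)%g.

Definition revprod (gT : finGroupType) (m : nat) (a : {ffun 'I_m -> gT}) : gT :=
  (\prod_(i < m) a (rev_ord i))%g.

Definition tuples_in (gT : finGroupType) (G : {set gT}) (m : nat) :=
  [set a : {ffun 'I_m -> gT} | [forall i, a i \in G]].

Definition revProbability (gT : finGroupType) (G : {group gT}) (n : nat) : rat :=
  (#|[set a in tuples_in G (2 * n) | revprod a == seqprod a]|%:R
    / (#|G| ^ (2 * n))%:R)%R.

(* Stab.Prod_n(x_1,...,x_n) = {(b_1..b_n) in G^n | prod b_t^-1 x_t b_t = prod x_t}.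
   In mathcomp, x ^ b = b^-1 * x * b. *)
Definition StabProd (gT : finGroupType) (G : {group gT}) (n : nat)
    (x : {ffun 'I_n -> gT}) : {set {ffun 'I_n -> gT}} :=
  [set b in tuples_in G n |
     (\prod_(t < n) (x t ^ b t))%g == seqprod x].

(* c_{i_1..i_n; j}(G): number of (x_1..x_n) with x_t in Omega_{i_t} and
   x_1...x_n = y, for the fixed representative y = repr Omega_j. *)
Definition classProdCount (gT : finGroupType) (n : nat)
    (C : {ffun 'I_n -> {set gT}}) (D : {set gT}) : nat :=
  #|[set x : {ffun 'I_n -> gT} | [forall t, x t \in C t] && (seqprod x == repr D)]|.

From Pilot Require Import Defs.
From HB Require Import structures.
From mathcomp Require Import all_boot all_order all_algebra all_fingroup.
From mathcomp Require Import zify ring.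
Import GRing.Theory Num.Theory.
Set Implicit Arguments. Unset Strict Implicit. Unset Printing Implicit Defensive.

(* Writing a_(2t-1) = u_t and a_(2t) = u_t^-1 x_t turns a_1 ... a_2n into x_1 ... x_n and
   a_2n ... a_1 into x_n^u_n ... x_1^u_1.  The number of u giving a product of conjugates
   equal to g is a class function of g, which lets one reverse the order of the factors
   (peel off the last one: g y^-1 and y^-1 g are conjugate); this is the first formula.
   For the second, group the tuples x by their tuple of classes C: orbit-stabiliser gives
   |C_1| ... |C_n| |Stab.Prod_n(x)| = |G|^n c(C; x_1 ... x_n), and summing over the x in C
   collects, for each class, |class| copies of c(C; -)^2. *)

Lemma card_set_bij (I J : finType) (h : I -> J) (Q : pred J) :
  bijective h -> #|[set j | Q j]| = #|[set i | Q (h i)]|.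
Proof.
move=> bh; rewrite -(on_card_preimset (onW_bij _ bh)).
by apply: eq_card => i; rewrite !inE.
Qed.

Lemma card_set_pair (I J : finType) (P : pred I) (Q : I -> pred J) :
  #|[set p : I * J | P p.1 && Q p.1 p.2]| = \sum_(i | P i) #|[set j | Q i j]|.
Proof.
rewrite -sum1_card (eq_bigl (fun p : I * J => P p.1 && Q p.1 p.2)) => [|p]; last by rewrite inE.
rewrite -(pair_big_dep _ _ (fun _ _ => 1)); apply: eq_bigr => i _.
by rewrite -sum1_card; apply: eq_bigl => j; rewrite inE.
Qed.

Section FamilySets.
Variable T : finType.

Definition family_set m (S : 'I_m -> {set T}) :=
  [set a : {ffun 'I_m -> T} | [forall i, a i \in S i]].

Definition ffun_rcons m (b : {ffun 'I_m -> T}) (c : T) : {ffun 'I_m.+1 -> T} :=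
  [ffun i : 'I_m.+1 => if insub (val i) is Some j then b j else c].

Definition ffun_belast m (b : {ffun 'I_m.+1 -> T}) : {ffun 'I_m -> T} :=
  [ffun j => b (widen_ord (leqnSn m) j)].

Lemma ffun_rcons_widen m b c (j : 'I_m) :
  ffun_rcons b c (widen_ord (leqnSn m) j) = b j.
Proof.
by rewrite ffunE; case: insubP => [j' _ /val_inj -> //|]; rewrite /= ltn_ord.
Qed.

Lemma ffun_rcons_max m b c : ffun_rcons b c (@ord_max m) = c.
Proof. by rewrite ffunE insubF //= ltnn. Qed.

Lemma nltn_ord_max m (i : 'I_m.+1) : ~~ (i < m) -> i = ord_max.
Proof. by move=> him; apply: val_inj => /=; have := ltn_ord i; lia. Qed.

Lemma ffun_belast_rcons m b c : ffun_belast (@ffun_rcons m b c) = b.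
Proof. by apply/ffunP => j; rewrite ffunE ffun_rcons_widen. Qed.

Lemma ffun_rcons_belast m (b : {ffun 'I_m.+1 -> T}) :
  ffun_rcons (ffun_belast b) (b ord_max) = b.
Proof.
apply/ffunP => i; rewrite ffunE; case: insubP => [j _ vj|/nltn_ord_max -> //].
by rewrite ffunE; congr (b _); apply: val_inj.
Qed.

Lemma mem_family_set_rcons m (S : 'I_m.+1 -> {set T}) b c :
  (ffun_rcons b c \in family_set S) =
  (c \in S ord_max) && (b \in family_set (fun j => S (widen_ord (leqnSn m) j))).
Proof.
rewrite !inE; apply/forallP/andP => [h|[hc /forallP hb] i].
  split; first by have := h ord_max; rewrite ffun_rcons_max.
  by apply/forallP => j; have := h (widen_ord (leqnSn m) j); rewrite ffun_rcons_widen.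
rewrite ffunE; case: insubP => [j _ vj|/nltn_ord_max -> //].
by have := hb j; congr (_ \in S _); apply: val_inj.
Qed.

Lemma card_family_set_rcons m (S : 'I_m.+1 -> {set T}) (P : pred {ffun 'I_m.+1 -> T}) :
  #|[set b in family_set S | P b]| =
  \sum_(c in S ord_max)
     #|[set b in family_set (fun j => S (widen_ord (leqnSn m) j)) | P (ffun_rcons b c)]|.
Proof.
have bij_rcons : bijective (fun p : T * {ffun 'I_m -> T} => ffun_rcons p.2 p.1).
  exists (fun b : {ffun 'I_m.+1 -> T} => (b ord_max, ffun_belast b)) => [[c b]|b] /=.
    by rewrite ffun_rcons_max ffun_belast_rcons.
  exact: ffun_rcons_belast.
rewrite (card_set_bij _ bij_rcons) -card_set_pair.
apply: eq_card => -[c b].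
by rewrite [in LHS]in_set [in RHS]in_set /= mem_family_set_rcons andbA.
Qed.

End FamilySets.

Lemma prodg_nat_pairs (gT : finGroupType) (f : nat -> gT) n :
  (\prod_(0 <= i < (2 * n)%N) f i = \prod_(0 <= t < n) (f (2 * t)%N * f (2 * t)%N.+1))%g.
Proof.
elim: n => [|n IHn]; first by rewrite muln0 !big_geq.
by rewrite mulnS !addSn add0n !big_nat_recr //= IHn mulgA.
Qed.

Section EvenOddIndices.
Variable n : nat.

Lemma double_ord_lt (t : 'I_n) : 2 * t < 2 * n.
Proof. by have := ltn_ord t; lia. Qed.

Lemma double_ordS_lt (t : 'I_n) : (2 * t).+1 < 2 * n.
Proof. by have := ltn_ord t; lia. Qed.

Lemma half_ord_lt (i : 'I_(2 * n)) : i./2 < n.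
Proof. by rewrite ltn_half_double -mul2n. Qed.

Definition ord_even (t : 'I_n) : 'I_(2 * n) := Ordinal (double_ord_lt t).
Definition ord_odd (t : 'I_n) : 'I_(2 * n) := Ordinal (double_ordS_lt t).
Definition ord_half (i : 'I_(2 * n)) : 'I_n := Ordinal (half_ord_lt i).

Lemma ord_half_even t : ord_half (ord_even t) = t.
Proof. by apply: val_inj => /=; rewrite mul2n doubleK. Qed.

Lemma ord_half_odd t : ord_half (ord_odd t) = t.
Proof. by apply: val_inj => /=; rewrite mul2n uphalf_double. Qed.

Lemma odd_ord_even t : odd (ord_even t) = false.
Proof. by rewrite /= mul2n odd_double. Qed.

Lemma odd_ord_odd t : odd (ord_odd t) = true.
Proof. by rewrite /= mul2n odd_double. Qed.

Lemma ord_half_oddK (i : 'I_(2 * n)) :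
  (if odd i then ord_odd (ord_half i) else ord_even (ord_half i)) = i.
Proof. by apply: val_inj; have := odd_double_half i; case: (odd i) => /=; lia. Qed.

Lemma rev_ord_even t : rev_ord (ord_even t) = ord_odd (rev_ord t).
Proof. by apply: val_inj => /=; have := ltn_ord t; lia. Qed.

Lemma rev_ord_odd t : rev_ord (ord_odd t) = ord_even (rev_ord t).
Proof. by apply: val_inj => /=; have := ltn_ord t; lia. Qed.

Lemma prodg_pairs (gT : finGroupType) (F : 'I_(2 * n) -> gT) :
  (\prod_(i < (2 * n)%N) F i = \prod_(t < n) (F (ord_even t) * F (ord_odd t)))%g.
Proof.
pose f i := if insub i is Some j then F j else 1%g.
have -> : (\prod_(i < (2 * n)%N) F i = \prod_(i < (2 * n)%N) f i)%g.
  by apply: eq_bigr => i _; rewrite /f valK.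
rewrite -(big_mkord xpredT f) prodg_nat_pairs big_mkord; apply: eq_bigr => t _.
by rewrite /f -[2 * t]/(val (ord_even t)) -[(2 * t).+1]/(val (ord_odd t)) !valK.
Qed.

End EvenOddIndices.

Section ConjugateProducts.
Variables (gT : finGroupType) (G : {group gT}).
Local Open Scope group_scope.

Definition conj_prod_count n (x : {ffun 'I_n -> gT}) (g : gT) :=
  #|[set b in tuples_in G n | \prod_(t < n) x t ^ b t == g]|.

Definition rev_conj_prod_count n (x : {ffun 'I_n -> gT}) (g : gT) :=
  #|[set b in tuples_in G n | \prod_(t < n) x (rev_ord t) ^ b (rev_ord t) == g]|.

Lemma tuples_in_family n : tuples_in G n = family_set (fun _ : 'I_n => G).
Proof. by []. Qed.

Lemma rev_ord0 n : rev_ord (@ord0 n) = ord_max.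
Proof. by apply: val_inj => /=; rewrite subSS subn0. Qed.

Lemma rev_ord_lift n (i : 'I_n) :
  rev_ord (lift ord0 i) = widen_ord (leqnSn n) (rev_ord i).
Proof. by apply: val_inj => /=; rewrite /bump /= add1n subSS. Qed.

Lemma conj_prod_count_rcons n x g :
  conj_prod_count x g =
  \sum_(c in G) conj_prod_count (ffun_belast x) (g * (x (@ord_max n) ^ c)^-1).
Proof.
rewrite /conj_prod_count tuples_in_family card_family_set_rcons.
apply: eq_bigr => c _; apply: eq_card => b; rewrite !in_set; congr (_ && _).
rewrite big_ord_recr /= ffun_rcons_max (canF_eq (mulgK _)); congr (_ == _).
by apply: eq_bigr => i _; rewrite ffun_rcons_widen ffunE.
Qed.

Lemma rev_conj_prod_count_rcons n x g :
  rev_conj_prod_count x g =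
  \sum_(c in G) rev_conj_prod_count (ffun_belast x) ((x (@ord_max n) ^ c)^-1 * g).
Proof.
rewrite /rev_conj_prod_count tuples_in_family card_family_set_rcons.
apply: eq_bigr => c _; apply: eq_card => b; rewrite !in_set; congr (_ && _).
rewrite big_ord_recl /= rev_ord0 ffun_rcons_max (canF_eq (mulKg _)); congr (_ == _).
by apply: eq_bigr => i _; rewrite rev_ord_lift ffun_rcons_widen ffunE.
Qed.

Lemma conj_prod_countJ n (x : {ffun 'I_n -> gT}) g k :
  k \in G -> conj_prod_count x (g ^ k) = conj_prod_count x g.
Proof.
move=> kG; have mulk_bij : bijective (fun b : {ffun 'I_n -> gT} => [ffun t => b t * k]).
  by exists (fun b : {ffun 'I_n -> gT} => [ffun t => b t * k^-1]) => b;
    apply/ffunP => t; rewrite !ffunE ?mulgK ?mulgKV.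
rewrite /conj_prod_count (card_set_bij _ mulk_bij); apply: eq_card => b.
rewrite !in_set; congr (_ && _).
  by apply/forallP/forallP => h t; have := h t; rewrite ffunE groupMr.
under eq_bigr => t _ do rewrite ffunE conjgM.
by rewrite -conjg_prod (inj_eq (@conjg_inj _ k)).
Qed.

Lemma rev_conj_prod_count_eq n (x : {ffun 'I_n -> gT}) g :
  (forall t, x t \in G) -> rev_conj_prod_count x g = conj_prod_count x g.
Proof.
elim: n x g => [|n IHn] x g xG.
  by apply: eq_card => b; rewrite !in_set !big_ord0.
rewrite rev_conj_prod_count_rcons conj_prod_count_rcons; apply: eq_bigr => c cG.
rewrite IHn => [|t]; last by rewrite ffunE.
have yG : x ord_max ^ c \in G by rewrite groupJ.
set y := x ord_max ^ c.
(* [g y^-1] and [y^-1 g] are conjugate by [y^-1]. *)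
by rewrite -(conj_prod_countJ _ _ (groupVr yG)) conjgE invgK !mulgA mulgV mul1g.
Qed.

Definition interleave_conj n (p : {ffun 'I_n -> gT} * {ffun 'I_n -> gT}) :
    {ffun 'I_(2 * n) -> gT} :=
  [ffun i : 'I_(2 * n) =>
     if odd i then (p.2 (ord_half i))^-1 * p.1 (ord_half i) else p.2 (ord_half i)].

Lemma interleave_conj_even n p (t : 'I_n) : interleave_conj p (ord_even t) = p.2 t.
Proof. by rewrite ffunE odd_ord_even ord_half_even. Qed.

Lemma interleave_conj_odd n p (t : 'I_n) :
  interleave_conj p (ord_odd t) = (p.2 t)^-1 * p.1 t.
Proof. by rewrite ffunE odd_ord_odd ord_half_odd. Qed.

Lemma interleave_conj_bij n : bijective (@interleave_conj n).
Proof.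
exists (fun a : {ffun 'I_(2 * n) -> gT} =>
  ([ffun t => a (ord_even t) * a (ord_odd t)], [ffun t => a (ord_even t)])).
  move=> [x u]; congr (_, _); apply/ffunP => t;
  by rewrite ffunE ?interleave_conj_even ?interleave_conj_odd ?mulKVg.
move=> a; apply/ffunP => i; rewrite ffunE /=.
by case odd_i: (odd i); rewrite !ffunE ?mulKg -[in RHS](ord_half_oddK i) odd_i.
Qed.

Lemma interleave_conj_in n (p : {ffun 'I_n -> gT} * {ffun 'I_n -> gT}) :
  (interleave_conj p \in tuples_in G (2 * n)) =
  (p.1 \in tuples_in G n) && (p.2 \in tuples_in G n).
Proof.
rewrite !inE; apply/forallP/andP => [a_in|[/forallP x_in /forallP u_in] i].
  split; apply/forallP => t; last by have := a_in (ord_even t); rewrite interleave_conj_even.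
  have := groupM (a_in (ord_even t)) (a_in (ord_odd t)).
  by rewrite interleave_conj_even interleave_conj_odd mulKVg.
by rewrite ffunE; case: (odd i); rewrite ?groupM ?groupV.
Qed.

(* [Defs.seqprod] is qualified because order.v also exports a [seqprod]. *)
Lemma seqprod_interleave_conj n (p : {ffun 'I_n -> gT} * {ffun 'I_n -> gT}) :
  Defs.seqprod (interleave_conj p) = Defs.seqprod p.1.
Proof.
rewrite /Defs.seqprod prodg_pairs; apply: eq_bigr => t _.
by rewrite interleave_conj_even interleave_conj_odd mulKVg.
Qed.

Lemma revprod_interleave_conj n (p : {ffun 'I_n -> gT} * {ffun 'I_n -> gT}) :
  revprod (interleave_conj p) = \prod_(t < n) p.1 (rev_ord t) ^ p.2 (rev_ord t).
Proof.
rewrite /revprod prodg_pairs; apply: eq_bigr => t _.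
by rewrite rev_ord_even rev_ord_odd interleave_conj_even interleave_conj_odd conjgE mulgA.
Qed.

Lemma card_revprod_eq_seqprod n :
  #|[set a in tuples_in G (2 * n) | revprod a == Defs.seqprod a]| =
  \sum_(x in tuples_in G n) #|StabProd G x|.
Proof.
pose Q (x u : {ffun 'I_n -> gT}) := (u \in tuples_in G n) &&
  (\prod_(t < n) x (rev_ord t) ^ u (rev_ord t) == Defs.seqprod x).
transitivity (\sum_(x in tuples_in G n) #|[set u | Q x u]|).
  rewrite (card_set_bij _ (@interleave_conj_bij n)) -card_set_pair.
  apply: eq_card => p; rewrite [in LHS]in_set [in RHS]in_set interleave_conj_in.
  by rewrite seqprod_interleave_conj revprod_interleave_conj andbA.
apply: eq_bigr => x; rewrite inE => /forallP x_in.
exact: rev_conj_prod_count_eq.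
Qed.

End ConjugateProducts.

Section ClassSums.
Variables (gT : finGroupType) (G : {group gT}).

Lemma conjg_eq_cent1 (y c d : gT) : (y ^ c == y ^ d)%g = (c * d^-1 \in 'C[y])%g.
Proof.
rewrite -(inj_eq (@conjg_inj _ d^-1%g)) -!conjgM mulgV conjg1 cent1E.
move: (c * d^-1)%g => z.
by rewrite conjgE -(inj_eq (mulgI z)) !mulgA mulgV mul1g eq_sym.
Qed.

Lemma card_class_fiber (y w : gT) : y \in G -> w \in (y ^: G)%g ->
  #|(y ^: G)%g| * #|[set c in G | (y ^ c)%g == w]| = #|G|.
Proof.
move=> yG /imsetP [d dG ->].
have -> : [set c in G | (y ^ c == y ^ d)%g] = ('C_G[y] :* d)%g.
  apply/setP => c; rewrite in_set mem_rcoset in_setI groupMr ?groupV //.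
  by rewrite conjg_eq_cent1.
by rewrite card_rcoset -index_cent1 mulnC Lagrange // subsetIl.
Qed.

Lemma sum_conj_class (y : gT) (phi : gT -> nat) : y \in G ->
  #|(y ^: G)%g| * \sum_(c in G) phi (y ^ c)%g = #|G| * \sum_(w in (y ^: G)%g) phi w.
Proof.
move=> yG; rewrite (partition_big (fun c => (y ^ c)%g) (mem (y ^: G)%g)); last first.
  by move=> c cG; exact: memJ_class.
rewrite !big_distrr; apply: eq_bigr => w wC.
rewrite (eq_bigr (fun _ => phi w)) => [|c /andP [_ /eqP ->] //].
rewrite sum_nat_const /= mulnA -(card_class_fiber yG wC).
by congr (_ * _ * _); apply: eq_card => c; rewrite inE.
Qed.

End ClassSums.

Section ClassProducts.
Variables (gT : finGroupType) (G : {group gT}).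

Definition class_prod_count n (C : {ffun 'I_n -> {set gT}}) (g : gT) :=
  #|[set w : {ffun 'I_n -> gT} | [forall t, w t \in C t] && (Defs.seqprod w == g)]|.

Definition class_tuple n (x : {ffun 'I_n -> gT}) : {ffun 'I_n -> {set gT}} :=
  [ffun t => (x t ^: G)%g].

Definition is_class_tuple n (C : {ffun 'I_n -> {set gT}}) := [forall t, C t \in classes G].

Lemma class_prod_count_rcons n (C : {ffun 'I_n.+1 -> {set gT}}) g :
  class_prod_count C g =
  \sum_(c in C ord_max) class_prod_count [ffun j => C (widen_ord (leqnSn n) j)] (g * c^-1)%g.
Proof.
rewrite /class_prod_count (eq_card (B := [set w in family_set C | Defs.seqprod w == g])).
  rewrite card_family_set_rcons; apply: eq_bigr => c _; apply: eq_card => w.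
  rewrite !inE /Defs.seqprod big_ord_recr /= ffun_rcons_max (canF_eq (mulgK _)).
  under eq_bigr => i _ do rewrite ffun_rcons_widen.
  by congr (_ && _); apply: eq_forallb => j; rewrite ffunE.
by move=> w; rewrite !inE.
Qed.

Lemma conj_prod_count_classes n (x : {ffun 'I_n -> gT}) g : (forall t, x t \in G) ->
  (\prod_(t < n) #|(x t ^: G)%g|) * conj_prod_count G x g =
  #|G| ^ n * class_prod_count (class_tuple x) g.
Proof.
elim: n x g => [|n IHn] x g xG.
  rewrite big_ord0 expn0 !mul1n; apply: eq_card => b.
  rewrite !inE /Defs.seqprod !big_ord0; congr (_ && _).
  by apply/forallP/forallP => _ [].
have belast_xG t : ffun_belast x t \in G by rewrite ffunE.
rewrite conj_prod_count_rcons class_prod_count_rcons big_ord_recr /= mulnAC big_distrr /=.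
rewrite (eq_bigr (fun c => #|G| ^ n *
    class_prod_count (class_tuple (ffun_belast x)) (g * (x ord_max ^ c)^-1)%g)); last first.
  move=> c _; rewrite -IHn //; congr (_ * _).
  by apply: eq_bigr => t _; rewrite ffunE.
rewrite -big_distrr /= -mulnA [_ * #|_|]mulnC.
rewrite (sum_conj_class (fun w => class_prod_count _ (g * w^-1)%g)) //.
rewrite mulnA -expnSr {2}/class_tuple ffunE; congr (_ * _).
by apply: eq_bigr => w _; congr class_prod_count; apply/ffunP => j; rewrite !ffunE.
Qed.

Lemma mem_classJ (C : {set gT}) w k :
  C \in classes G -> k \in G -> ((w ^ k)%g \in C) = (w \in C).
Proof.
by case/imsetP=> y _ -> kG; rewrite memJ_norm // (subsetP (class_norm y G)).
Qed.

Lemma class_prod_countJ n (C : {ffun 'I_n -> {set gT}}) g k :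
  is_class_tuple C -> k \in G -> class_prod_count C (g ^ k)%g = class_prod_count C g.
Proof.
move=> /forallP C_cl kG.
have conjk_bij : bijective (fun w : {ffun 'I_n -> gT} => [ffun t => w t ^ k]%g).
  by exists (fun w : {ffun 'I_n -> gT} => [ffun t => w t ^ k^-1]%g) => w;
    apply/ffunP => t; rewrite !ffunE ?conjgK ?conjgKV.
rewrite /class_prod_count (card_set_bij _ conjk_bij); apply: eq_card => w.
rewrite !inE /Defs.seqprod; congr (_ && _).
  by apply: eq_forallb => t; rewrite ffunE mem_classJ.
under eq_bigr => t _ do rewrite ffunE.
by rewrite -conjg_prod (inj_eq (@conjg_inj _ k)).
Qed.

Lemma sum_seqprod_family n (C : {ffun 'I_n -> {set gT}}) (f : gT -> nat) :
  is_class_tuple C ->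
  \sum_(w : {ffun 'I_n -> gT} | [forall t, w t \in C t]) f (Defs.seqprod w) =
  \sum_(g in G) class_prod_count C g * f g.
Proof.
move=> /forallP C_cl; rewrite (partition_big (@Defs.seqprod _ _) (mem G)) => [|w /forallP w_in].
  apply: eq_bigr => g _; rewrite (eq_bigr (fun _ => f g)) => [|w /andP [_ /eqP ->] //].
  by rewrite sum_nat_const; congr (_ * _); apply: eq_card => w; rewrite inE.
apply: group_prod => t _; case/imsetP: (C_cl t) (w_in t) => y yG ->.
by case/imsetP=> k kG ->; rewrite groupJ.
Qed.

Lemma mem_class_classes (D : {set gT}) g :
  D \in classes G -> (g \in D) = (g \in G) && ((g ^: G)%g == D).
Proof.
case/imsetP=> y yG ->; apply/idP/andP => [gD | [_ /eqP <-]]; last exact: class_refl.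
split; last by apply/eqP/class_eqP.
by case/imsetP: gD => k kG ->; rewrite groupJ.
Qed.

Lemma sum_class_fun (h : gT -> nat) :
  {in G &, forall g k, h (g ^ k)%g = h g} ->
  \sum_(g in G) h g = \sum_(D in classes G) #|D| * h (repr D).
Proof.
move=> hJ; rewrite (partition_big (fun g => (g ^: G)%g) (mem (classes G))) => [|g gG]; last first.
  exact: mem_classes.
apply: eq_bigr => D D_cl; case/repr_classesP: (D_cl) => rG D_def.
rewrite (eq_bigl (fun g => g \in D)) => [|g]; last by rewrite (mem_class_classes _ D_cl).
rewrite (eq_bigr (fun _ => h (repr D))) ?sum_nat_const // => g.
by rewrite {1}D_def => /imsetP [k kG ->]; rewrite hJ.
Qed.

Lemma sum_class_prod_count_sq n (C : {ffun 'I_n -> {set gT}}) : is_class_tuple C ->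
  \sum_(w : {ffun 'I_n -> gT} | [forall t, w t \in C t]) class_prod_count C (Defs.seqprod w) =
  \sum_(D in classes G) #|D| * class_prod_count C (repr D) ^ 2.
Proof.
move=> C_cl; rewrite sum_seqprod_family // (sum_class_fun (h := fun g => _ * _)).
  by apply: eq_bigr => D _; rewrite mulnn.
by move=> g k _ kG; rewrite class_prod_countJ.
Qed.

Lemma class_tuple_classes n (x : {ffun 'I_n -> gT}) :
  x \in tuples_in G n -> is_class_tuple (class_tuple x).
Proof. by rewrite inE => /forallP x_in; apply/forallP => t; rewrite ffunE mem_classes. Qed.

Lemma class_tupleP n (C : {ffun 'I_n -> {set gT}}) (x : {ffun 'I_n -> gT}) :
  is_class_tuple C ->
  (x \in tuples_in G n) && (class_tuple x == C) = [forall t, x t \in C t].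
Proof.
move=> /forallP C_cl; apply/andP/forallP => [[_ /eqP <-] t|x_in].
  by rewrite ffunE class_refl.
have x_cl t : (x t \in G) && ((x t ^: G)%g == C t) by rewrite -mem_class_classes.
split; first by rewrite inE; apply/forallP => t; case/andP: (x_cl t).
by apply/eqP/ffunP => t; rewrite ffunE; case/andP: (x_cl t) => _ /eqP.
Qed.

Lemma sum_card_StabProd_class_tuple n (C : {ffun 'I_n -> {set gT}}) : is_class_tuple C ->
  (\prod_(t < n) #|C t|) * \sum_(x in tuples_in G n | class_tuple x == C) #|StabProd G x| =
  #|G| ^ n * \sum_(D in classes G) #|D| * classProdCount C D ^ 2.
Proof.
move=> C_cl; rewrite big_distrr /=.
rewrite (eq_bigr (fun x => #|G| ^ n * class_prod_count C (Defs.seqprod x))) => [|x].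
  by rewrite -big_distrr -sum_class_prod_count_sq //; congr (_ * _); apply: eq_bigl => x;
    rewrite class_tupleP.
rewrite inE => /andP [/forallP x_in /eqP <-].
rewrite -conj_prod_count_classes //; congr (_ * _).
by apply: eq_bigr => t _; rewrite ffunE.
Qed.

End ClassProducts.

Lemma div_sq_eq_div (F : fieldType) (a b s k : F) :
  (a != 0 -> b != 0 -> a * s = b * k -> s / (b * b) = k / (a * b))%R.
Proof. by move=> a0 b0 e; rewrite -(mulKf a0 s) e; field; apply/andP. Qed.

Theorem mainTheorem11 (gT : finGroupType) (G : {group gT}) (n : nat) :
  (0 < n)%N ->
  revProbability G n =
    ((\sum_(x in tuples_in G n) #|StabProd G x|)%:R / (#|G| ^ (2 * n))%:R)%R
  /\
  revProbability G n =
    (\sum_(C : {ffun 'I_n -> {set gT}} | [forall t, C t \in classes G])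
       \sum_(D in classes G)
         ((#|D| * classProdCount C D ^ 2)%:R
          / ((\prod_(t < n) #|C t|) * #|G| ^ n)%:R))%R.
Proof.
move=> _; rewrite /revProbability card_revprod_eq_seqprod; split=> //.
rewrite (partition_big (@class_tuple _ G n) (@is_class_tuple _ G n)) => [|x]; last first.
  exact: class_tuple_classes.
rewrite natr_sum mulr_suml; apply: eq_bigr => C C_cl.
rewrite -mulr_suml -natr_sum mul2n -addnn expnD !natrM.
have G0 : ((#|G| ^ n)%:R != 0 :> rat)%R by rewrite pnatr_eq0 -lt0n expn_gt0 cardG_gt0.
have C0 : ((\prod_(t < n) #|C t|)%:R != 0 :> rat)%R.
  rewrite pnatr_eq0 -lt0n prodn_gt0 // => t; apply/card_gt0P.
  by exists (repr (C t)); apply/mem_repr_classes/(forallP C_cl).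
by apply: div_sq_eq_div; rewrite // -!natrM sum_card_StabProd_class_tuple.
Qed.
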